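(* For every $n \in \mathbb N$ and $q \in \{0,1,\dots,\lfloor n/2\rfloor\}$, $$\sum_{\mathbf m \in S_{n,q,1}} \pi_{\mathbf m} = \frac{1}{(n-2q)!\, q!\, 2^q}.$$
   Context: $S_{n,q,1} = \{\mathbf m=(m_1,\dots,m_{n-q}) \in \{0,1\}^{n-q} : m_1+\cdots+m_{n-q} = q\}$, and for such $\mathbf m$, $\pi_{\mathbf m} = \prod_{i=1}^{n-q} [m_i+m_{i+1}+\cdots+m_{n-q} + (n-q-i+1)]^{-1}$. *)

From mathcomp Require Import all_boot all_order all_algebra.
Set Implicit Arguments. Unset Strict Implicit. Unset Printing Implicit Defensive.
Import Order.TTheory GRing.Theory Num.Theory.

(* Vectors m = (m_1,...,m_N) in {0,1}^N are finite functions 'I_N -> bool,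
   with 0-based index i corresponding to the paper's index i+1. *)

(* S_{n,q,1} membership: sum of entries of m (of length N = n - q) equals q *)
Definition inS (N q : nat) (m : {ffun 'I_N -> bool}) : bool :=
  (\sum_(i < N) (m i : nat))%N == q.

(* pi_m = prod_{i=1}^{N} [m_i + ... + m_N + (N - i + 1)]^{-1};
   with 0-based i this is prod_{i<N} [sum_{j >= i} m_j + (N - i)]^{-1}. *)
Definition pi_m (N : nat) (m : {ffun 'I_N -> bool}) : rat :=
  \prod_(i < N)
    (((\sum_(j < N | (i <= j)%N) (m j : nat)) + (N - i))%N%:R)^-1.

From mathcomp Require Import all_boot all_order all_algebra.
From mathcomp Require Import zify.
Import Order.TTheory GRing.Theory Num.Theory.
Local Open Scope ring_scope.

(* Write W N q for the weighted count  sum_{m in {0,1}^N, |m| = q} pi_m.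
   Splitting a vector m of length N+1 into its first bit b and its tail m'
   gives |m| = b + |m'| and  pi_m = (|m| + N + 1)^-1 * pi_m', hence
     (q + N + 1) * W (N+1) q = W N q + W N (q-1)     (last term absent if q = 0).
   The candidate value C N q = 1 / ((N-q)! q! 2^q)  (and 0 when q > N)
   satisfies the same recurrence, because of the two shift identities
     C N q = (N + 1 - q) * C (N+1) q   and   C N q = 2(q+1) * C (N+1) (q+1),
   whose coefficients add up to q + N + 1.  Both agree for N = 0, so W = C by
   induction on N; the theorem is the instance N = n - q, for which
   N - q = n - 2q. *)

Definition cons_bit {N} (b : bool) (m : {ffun 'I_N -> bool}) :
    {ffun 'I_N.+1 -> bool} :=
  [ffun i => if unlift ord0 i is Some j then m j else b].

Lemma cons_bit0 N b (m : {ffun 'I_N -> bool}) : cons_bit b m ord0 = b.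
Proof. by rewrite ffunE unlift_none. Qed.

Lemma cons_bitS N b (m : {ffun 'I_N -> bool}) j :
  cons_bit b m (lift ord0 j) = m j.
Proof. by rewrite ffunE liftK. Qed.

Lemma cons_bit_bij N :
  bijective (fun p : bool * {ffun 'I_N -> bool} => cons_bit p.1 p.2).
Proof.
exists (fun m : {ffun 'I_N.+1 -> bool} => (m ord0, [ffun j => m (lift ord0 j)])).
  move=> [b m] /=; rewrite cons_bit0; congr pair.
  by apply/ffunP => j; rewrite ffunE cons_bitS.
move=> m; apply/ffunP => i; rewrite ffunE.
by case: unliftP => [j ->|->]; rewrite ?ffunE.
Qed.

Lemma weight_cons_bit N b (m : {ffun 'I_N -> bool}) :
  (\sum_(i < N.+1) (cons_bit b m i : nat) = b + \sum_(i < N) (m i : nat))%N.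
Proof.
rewrite big_ord_recl cons_bit0; congr (_ + _)%N.
by apply: eq_bigr => i _; rewrite cons_bitS.
Qed.

Lemma pi_m_cons_bit N b (m : {ffun 'I_N -> bool}) :
  pi_m (cons_bit b m) =
    ((b + \sum_(i < N) (m i : nat) + N.+1)%N%:R)^-1 * pi_m m.
Proof.
rewrite /pi_m big_ord_recl subn0 -weight_cons_bit; congr (_ * _).
apply: eq_bigr => i _; congr ((_ + _)%N%:R^-1).
rewrite big_mkcond big_ord_recl /= add0n [RHS]big_mkcond.
by apply: eq_bigr => j _; rewrite cons_bitS /bump !leq0n !add1n ltnS.
Qed.

Definition weighted_count N q : rat :=
  \sum_(m : {ffun 'I_N -> bool} | inS q m) pi_m m.

(* Base case: the empty vector is the only vector of length 0; it has weight 0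
   and an empty product pi_m = 1. *)
Lemma weighted_count0 q : weighted_count 0 q = (q == 0%N)%:R.
Proof.
rewrite /weighted_count (eq_bigl (fun=> q == 0%N)) => [|m]; last first.
  by rewrite /inS big_ord0 eq_sym.
case: eqP => _; last by rewrite big_pred0.
rewrite (eq_bigr (fun=> 1)) => [|m _]; last by rewrite /pi_m big_ord0.
by rewrite sumr_const card_ffun card_bool card_ord.
Qed.

(* Splitting on the first bit: vectors starting with 0 contribute
   W N q, those starting with 1 contribute W N (q-1). *)
Lemma weighted_count_rec N q :
  (q + N.+1)%:R * weighted_count N.+1 q =
    weighted_count N q + (if q is q'.+1 then weighted_count N q' else 0).
Proof.
rewrite /weighted_count (reindex _ (onW_bij _ (cons_bit_bij N))) /=.
rewrite -(pair_big_dep xpredT (fun b m => inS q (cons_bit b m))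
                               (fun b m => pi_m (cons_bit b m))) /=.
rewrite big_bool /= mulrDr addrC mulr_sumr; congr (_ + _).
  apply: eq_big => m; rewrite /inS weight_cons_bit //.
  move=> /eqP wm; rewrite pi_m_cons_bit wm mulrA mulfV ?mul1r //.
  by rewrite pnatr_eq0 addnS.
rewrite mulr_sumr; case: q => [|q].
  by rewrite big_pred0 // => m; rewrite /inS weight_cons_bit.
apply: eq_big => m; rewrite /inS weight_cons_bit ?add1n ?eqSS //.
move=> /eqP wm; rewrite pi_m_cons_bit add1n wm mulrA mulfV ?mul1r //.
by rewrite pnatr_eq0 addnS.
Qed.

Definition closed_denom N q : nat := ((N - q)`! * q`! * 2 ^ q)%N.

Definition closed_form N q : rat :=
  if (q <= N)%N then (closed_denom N q)%:R^-1 else 0.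

Lemma invr_natM {R : numFieldType} (k d : nat) : (0 < k)%N ->
  (d%:R^-1 : R) = k%:R * (k * d)%N%:R^-1.
Proof.
move=> k_gt0.
by rewrite natrM invfM mulrA mulfV ?mul1r // pnatr_eq0 -lt0n.
Qed.

Lemma closed_form_shiftN N q :
  closed_form N q = (N.+1 - q)%:R * closed_form N.+1 q.
Proof.
rewrite /closed_form; have [le_qN|lt_Nq] := leqP q N; last first.
  by rewrite (_ : N.+1 - q = 0)%N ?mul0r //; lia.
rewrite (leq_trans le_qN) // (invr_natM (N.+1 - q)); last by lia.
by rewrite /closed_denom subSn // factS !mulnA.
Qed.

Lemma closed_form_shiftq N q :
  closed_form N q = (2 * q.+1)%:R * closed_form N.+1 q.+1.
Proof.
rewrite /closed_form ltnS; case: leqP => // _; last by rewrite mulr0.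
rewrite (invr_natM (2 * q.+1)) //.
by rewrite /closed_denom subSS factS expnS; congr (_ * _%:R^-1); nia.
Qed.

Lemma closed_form_rec N q :
  (q + N.+1)%:R * closed_form N.+1 q =
    closed_form N q + (if q is q'.+1 then closed_form N q' else 0).
Proof.
case: q => [|q].
  by rewrite addr0 [closed_form N 0]closed_form_shiftN subn0 add0n.
rewrite [closed_form N q.+1]closed_form_shiftN.
rewrite [closed_form N q]closed_form_shiftq -mulrDl -natrD.
have [le_qN|lt_Nq] := leqP q.+1 N.+1; first by congr (_%:R * _); lia.
by rewrite /closed_form leqNgt lt_Nq !mulr0.
Qed.

(* Both sides satisfy the same recurrence and agree for N = 0. *)
Lemma weighted_count_closed_form N q : weighted_count N q = closed_form N q.
Proof.
elim: N q => [|N IH] q.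
  rewrite weighted_count0 /closed_form leqn0.
  by case: q => [|q] //; rewrite /closed_denom /= invr1.
apply: (mulfI (_ : (q + N.+1)%:R != 0 :> rat)); first by rewrite pnatr_eq0 addnS.
by rewrite weighted_count_rec closed_form_rec; case: q => [|q]; rewrite !IH.
Qed.

Theorem lemma3 (n q : nat) (hq : (q <= n./2)%N) :
  \sum_(m : {ffun 'I_(n - q) -> bool} | inS q m) pi_m m
  = (((n - 2 * q)`! * q`! * 2 ^ q)%N%:R)^-1 :> rat.
Proof.
have le_q_nq : (q <= n - q)%N by move: hq; rewrite -divn2; lia.
have := weighted_count_closed_form (n - q) q.
rewrite /weighted_count /closed_form le_q_nq => ->.
by rewrite /closed_denom (_ : n - q - q = n - 2 * q)%N //; lia.
Qed.
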